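(* For every tree $T$, the skew token sliding graph $\mathcal{Z}^{\mathrm{TS}}_-(T)$ contains no edges.
   Context: Skew forcing: vertices are colored blue or white; if any vertex $u$ (blue or white) has exactly one white neighbor $v$, then $u$ may force $v$ to become blue. A skew forcing set is a (possibly empty) set of initially blue vertices from which repeated application of this rule turns every vertex blue; $\mathrm{Z}_-(G)$ is the minimum size of a skew forcing set. $\mathcal{Z}^{\mathrm{TS}}_-(G)$ has as vertices the minimum skew forcing sets of $G$, with $S_1S_2$ an edge iff $S_1\setminus S_2=\{v_1\}$, $S_2\setminus S_1=\{v_2\}$ and $v_1v_2\in E(G)$. *)

From mathcomp Require Import all_boot.
Set Implicit Arguments. Unset Strict Implicit. Unset Printing Implicit Defensive.

Definition simple_graph (T : finType) (e : rel T) : Prop :=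
  symmetric e /\ irreflexive e.

Definition edge_set (T : finType) (e : rel T) : {set {set T}} :=
  [set [set x; y] | x in T, y in T & e x y].

Definition is_tree (T : finType) (e : rel T) : Prop :=
  [/\ simple_graph e, 0 < #|T|,
      (forall x y : T, connect e x y) &
      #|edge_set e| = #|T| - 1].

(* Skew forcing rule: u (any color) with exactly one white neighbour v
   (v the only neighbour of u outside the blue set B) forces v. *)
Definition skew_force (T : finType) (e : rel T) (B : {set T}) (u v : T) : bool :=
  [&& e u v, v \notin B & [forall w, (e u w && (w != v)) ==> (w \in B)]].

Inductive skew_reach (T : finType) (e : rel T) : {set T} -> Prop :=
| skew_reach_all : skew_reach e [set: T]
| skew_reach_step (B : {set T}) (u v : T) :
    skew_force e B u v -> skew_reach e (v |: B) -> skew_reach e B.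

Definition skew_forcing_set (T : finType) (e : rel T) (S : {set T}) : Prop :=
  skew_reach e S.

Definition min_skew_forcing_set (T : finType) (e : rel T) (S : {set T}) : Prop :=
  skew_forcing_set e S /\
  forall S' : {set T}, skew_forcing_set e S' -> #|S| <= #|S'|.

Definition skew_TS_adj (T : finType) (e : rel T) (S1 S2 : {set T}) : Prop :=
  min_skew_forcing_set e S1 /\ min_skew_forcing_set e S2 /\
  exists v1 v2 : T,
    [/\ S1 :\: S2 = [set v1], S2 :\: S1 = [set v2] & e v1 v2].

(* Let S1, S2 be minimum skew forcing sets with S1 = v1 |: S, S2 = v2 |: S and
   v1 v2 an edge, and run skew forcing from S until it stalls at a set C. If v1
   or v2 is in C, then C contains S1 or S2, so S is a skew forcing set smaller
   than S1. Otherwise the white vertices with a white neighbour form a nonempty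
   set Q; since no force is available, every vertex of Q has two neighbours in
   Q, so Q induces at least |Q| edges, whereas in a tree every nonempty vertex
   set induces fewer edges than it has vertices. *)

From mathcomp Require Import all_boot zify.

Set Implicit Arguments.
Unset Strict Implicit.
Unset Printing Implicit Defensive.

Lemma cardsC_setU1 (T : finType) (B : {set T}) v :
  v \notin B -> #|~: B| = #|~: (v |: B)|.+1.
Proof. by move=> vB; rewrite (cardsD1 v (~: B)) inE vB setDE setCU setIC. Qed.

Section SkewForcing.
Variables (T : finType) (e : rel T).

Lemma skew_reachS (B B' : {set T}) :
  B \subset B' -> skew_reach e B -> skew_reach e B'.
Proof.
move=> sBB' reachB; elim: reachB B' sBB' => [|{}B u v fuv _ IH] B' sBB'.
  suff -> : B' = setT by apply: skew_reach_all.
  by apply/eqP; rewrite eqEsubset subsetT.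
case vB': (v \in B'); first by apply: IH; rewrite subUset sub1set vB'.
apply: (skew_reach_step (u := u) (v := v)); last by apply: IH; apply: setUS.
case/and3P: fuv => euv _ /forallP others; rewrite /skew_force euv vB' /=.
by apply/forallP => w; apply/implyP => /(implyP (others w)); apply: (subsetP sBB').
Qed.

Definition skew_stalled (C : {set T}) := forall u v, ~~ skew_force e C u v.

Lemma exists_skew_closure (B : {set T}) :
  exists2 C : {set T}, B \subset C &
    skew_stalled C /\ (skew_reach e C -> skew_reach e B).
Proof.
move: {2}#|~: B| (leqnn #|~: B|) => n; elim: n B => [|n IH] B.
  rewrite leqn0 cards_eq0 => /eqP coB0.
  have -> : B = setT by rewrite -[B]setCK coB0 setC0.
  by exists setT => //; split=> // u v; rewrite /skew_force in_setT andbF.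
move=> cardB.
have [stalled | ] := boolP [forall u, forall v, ~~ skew_force e B u v].
  by exists B => //; split=> // u v; apply: (forallP (forallP stalled u) v).
rewrite negb_forall => /existsP[u]; rewrite negb_forall => /existsP[v].
rewrite negbK => fuv.
have vB : v \notin B by case/and3P: fuv.
have [|C sBC [stalledC reachC]] := IH (v |: B).
  by rewrite (cardsC_setU1 vB) ltnS in cardB.
exists C; first by apply: subset_trans sBC; apply: subsetUr.
by split=> // /reachC; apply: skew_reach_step fuv.
Qed.

End SkewForcing.

Section InducedEdges.
Variables (T : finType) (e : rel T).

Definition induced_edges (X : {set T}) : {set {set T}} :=
  [set s in edge_set e | s \subset X].

Lemma edge_in_induced_edges (X : {set T}) x y :
  e x y -> x \in X -> y \in X -> [set x; y] \in induced_edges X.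
Proof.
move=> exy xX yX; rewrite inE subUset !sub1set xX yX !andbT.
by apply/imset2P; exists x y; rewrite ?inE.
Qed.

Lemma induced_edgesS (X Y : {set T}) :
  X \subset Y -> induced_edges X \subset induced_edges Y.
Proof.
move=> sXY; apply/subsetP => s; rewrite !inE => /andP[-> sX].
exact: subset_trans sXY.
Qed.

Lemma eq_set2 (a b x y : T) :
  [set a; b] = [set x; y] -> (a, b) = (x, y) \/ (a, b) = (y, x).
Proof.
move=> ab_xy.
have : a \in [set x; y] by rewrite -ab_xy set21.
have : b \in [set x; y] by rewrite -ab_xy set22.
have : x \in [set a; b] by rewrite ab_xy set21.
have : y \in [set a; b] by rewrite ab_xy set22.
by rewrite !inE; do 4!case/orP=> /eqP ?; subst; auto.
Qed.

Lemma card_arcs_le (Q : {set T}) :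
  #|[set p : T * T | [&& p.1 \in Q, p.2 \in Q & e p.1 p.2]]|
    <= 2 * #|induced_edges Q|.
Proof.
set D := [set p | _]; pose ends (p : T * T) := [set p.1; p.2].
have fiber_le2 s : s \in [set ends p | p in D] ->
    \sum_(p in D | ends p == s) 1 <= 2.
  case/imsetP => [[x y] _ ->]; rewrite sum1dep_card.
  have card_swaps : #|[set (x, y); (y, x)]| <= 2 by rewrite cards2 ltnS leq_b1.
  apply: leq_trans card_swaps; apply: subset_leq_card; apply/subsetP => -[a b].
  by rewrite !inE => /andP[_ /eqP/eq_set2[] ->]; rewrite eqxx ?orbT.
rewrite -sum1_card (partition_big_imset ends) /=.
apply: (@leq_trans (\sum_(s in [set ends p | p in D]) 2)); first exact: leq_sum.
rewrite sum_nat_const mulnC leq_mul2l.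
apply/orP; right; apply: subset_leq_card; apply/subsetP => s /imsetP[p].
by rewrite inE => /and3P[p1Q p2Q ep] ->; apply: edge_in_induced_edges.
Qed.

Lemma card_le_induced_edges (Q : {set T}) :
  (forall q, q \in Q -> 1 < #|[set a in Q | e q a]|) ->
  #|Q| <= #|induced_edges Q|.
Proof.
move=> deg_ge2; rewrite -(leq_pmul2l (isT : 0 < 2)).
apply: leq_trans (card_arcs_le Q); rewrite mulnC -sum_nat_const.
apply: (@leq_trans (\sum_(q in Q) #|[set a in Q | e q a]|)); first exact: leq_sum.
under eq_bigr do rewrite -sum1dep_card.
by rewrite pair_big_dep sum1dep_card.
Qed.

Hypotheses (e_sym : symmetric e) (e_connected : forall x y, connect e x y).

Lemma connected_boundary_edge (X : {set T}) x0 z :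
  x0 \in X -> z \notin X -> exists x y, [/\ x \in X, y \notin X & e x y].
Proof.
move=> x0X zX.
have [/existsP[x /existsP[y /and3P[xX yX exy]]]|none] :=
  boolP [exists x, exists y, [&& x \in X, y \notin X & e x y]].
  by exists x, y.
suff closedX : closed e (mem X).
  by move: zX; rewrite -(closed_connect closedX (e_connected x0 z)) x0X.
have inside x y : e x y -> x \in X -> y \in X.
  move=> exy xX; apply: contraNT none => yX.
  by apply/existsP; exists x; apply/existsP; exists y; rewrite xX yX exy.
by move=> x y exy; apply/idP/idP; apply: inside; rewrite // e_sym.
Qed.

(* Grow X along boundary edges: each added vertex adds at least one induced edge. *)
Lemma connected_induced_edges (X : {set T}) : X != set0 ->
  #|induced_edges X| + #|T| <= #|edge_set e| + #|X|.
Proof.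
have full : #|induced_edges setT| + #|T| <= #|edge_set e| + #|[set: T]|.
  rewrite cardsT leq_add2r subset_leq_card //.
  by apply/subsetP => s; rewrite inE => /andP[].
move: {2}#|~: X| (leqnn #|~: X|) => n; elim: n X => [|n IH] X coX X0.
  move: coX; rewrite leqn0 cards_eq0 => /eqP coX0.
  by rewrite -[X]setCK coX0 setC0.
have [->//|] := eqVneq X setT; rewrite -subTset => /subsetPn[z _ zX].
case/set0Pn: X0 => x0 x0X.
have [x [y [xX yX exy]]] := connected_boundary_edge x0X zX.
have new_edge : #|induced_edges X| < #|induced_edges (y |: X)|.
  apply: proper_card; apply/properP; split; first exact/induced_edgesS/subsetUr.
  exists [set x; y]; first by apply: edge_in_induced_edges; rewrite ?inE ?eqxx ?xX ?orbT.
  by rewrite inE negb_and subUset !sub1set (negbTE yX) andbF orbT.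
have coyX : #|~: (y |: X)| <= n by rewrite (cardsC_setU1 yX) ltnS in coX.
have yX0 : y |: X != set0 by apply/set0Pn; exists y; apply: setU11.
by have := IH _ coyX yX0; rewrite cardsU1 yX; lia.
Qed.

End InducedEdges.

Section Trees.
Variables (T : finType) (e : rel T).
Hypothesis e_tree : is_tree e.

Lemma tree_induced_edges_lt (X : {set T}) :
  X != set0 -> #|induced_edges e X| < #|X|.
Proof.
case: e_tree => -[e_sym _] T_gt0 e_connected card_edges X0.
by have := connected_induced_edges e_sym e_connected X0; rewrite card_edges; lia.
Qed.

Lemma tree_low_degree (Q : {set T}) :
  Q != set0 -> exists2 q, q \in Q & #|[set a in Q | e q a]| <= 1.
Proof.
move=> Q0; apply/exists_inP; apply: contraT; rewrite negb_exists_in.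
move=> /forall_inP deg_ge2; have := tree_induced_edges_lt Q0.
by rewrite ltnNge card_le_induced_edges // => q /deg_ge2; rewrite ltnNge.
Qed.

Lemma tree_skew_stalled_edge (C : {set T}) u v :
  skew_stalled e C -> e u v -> (u \in C) || (v \in C).
Proof.
move=> stalledC euv; apply: contraT; rewrite negb_or => /andP[uC vC].
have e_sym : symmetric e by case: e_tree => -[].
set Q := [set w | (w \notin C) && [exists a, (a \notin C) && e w a]].
have inQ w a : w \notin C -> a \notin C -> e w a -> w \in Q.
  by move=> wC aC ewa; rewrite inE wC; apply/existsP; exists a; rewrite aC.
have [|q] := tree_low_degree (Q := Q); first by apply/set0Pn; exists u; apply: inQ euv.
rewrite inE => /andP[qC /existsP[a /andP[aC eqa]]]; rewrite leqNgt; case/negP.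
have := stalledC q a; rewrite /skew_force eqa aC negb_forall => /existsP[b].
rewrite negb_imply => /andP[/andP[eqb ba] bC].
have aQ : a \in Q by apply: (inQ _ q); rewrite // e_sym.
have bQ : b \in Q by apply: (inQ _ q); rewrite // e_sym.
by apply/card_gt1P; exists a, b; rewrite inE aQ eqa inE bQ eqb eq_sym ba.
Qed.

End Trees.

Theorem theorem5p29 (T : finType) (e : rel T) :
  is_tree e -> forall S1 S2 : {set T}, ~ skew_TS_adj e S1 S2.
Proof.
move=> e_tree S1 S2 [[reach1 minS1] [[reach2 _] [v1 [v2 [S1_S2 S2_S1 ev]]]]].
set S := S1 :&: S2.
have v1S : v1 \notin S.
  by have := set11 v1; rewrite -S1_S2 !inE => /andP[/negbTE-> _]; rewrite andbF.
have S1E : S1 = v1 |: S by rewrite -[in LHS](setID S1 S2) S1_S2 setUC.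
have S2E : S2 = v2 |: S by rewrite /S setIC -[in LHS](setID S2 S1) S2_S1 setUC.
have [C SC [stalledC reachC]] := exists_skew_closure e S.
have reachS : skew_reach e S.
  apply: reachC; case/orP: (tree_skew_stalled_edge e_tree stalledC ev) => [v1C|v2C].
    by apply: skew_reachS reach1; rewrite S1E subUset sub1set v1C.
  by apply: skew_reachS reach2; rewrite S2E subUset sub1set v2C.
by have := minS1 S reachS; rewrite S1E cardsU1 v1S add1n ltnn.
Qed.
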